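(* Let $n$ be a positive integer with $n \equiv 3 \pmod 6$ and \[n \notin \{9, 15, 21, 141, 153, 165, 177, 189, 231, 249, 261, 285, 351, 357\},\] and let $\rho$ be an integer with $1 \le \rho \le n/3$. Then there exists an $(n+\rho,4)$-packing with exactly $\rho n/3 + D(\rho,4)$ blocks in which the largest partial parallel class has size $\rho$.
   Context: For integers $v \ge k \ge 2$, a $(v,k)$-packing is a pair $(X,\mathcal{B})$ where $X$ is a set of $v$ points and $\mathcal{B}$ is a set of $k$-subsets of $X$ (blocks) such that every pair of distinct points lies in at most one block. For integers $m \ge 0$, $D(m,k)$ denotes the maximum number of $k$-subsets of an $m$-set such that every pair of points lies in at most one of them (so $D(m,k)=0$ if $m<k$). A partial parallel class (PPC) is a set of pairwise disjoint blocks; its size is the number of blocks in it. ''The largest PPC has size $\rho$'' means that the packing contains a PPC of size $\rho$ but no PPC of size $\rho+1$. *)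

From mathcomp Require Import all_boot.
Set Implicit Arguments. Unset Strict Implicit. Unset Printing Implicit Defensive.

Definition is_packing (v k : nat) (B : {set {set 'I_v}}) : Prop :=
  (forall b, b \in B -> #|b| = k) /\
  (forall x y : 'I_v, x != y ->
     #|[set b in B | (x \in b) && (y \in b)]| <= 1).

Definition is_packingb (v k : nat) (B : {set {set 'I_v}}) : bool :=
  [forall b in B, #|b| == k] &&
  [forall x : 'I_v, forall y : 'I_v,
     (x != y) ==> (#|[set b in B | (x \in b) && (y \in b)]| <= 1)].

Definition D (m k : nat) : nat :=
  \max_(B : {set {set 'I_m}} | is_packingb k B) #|B|.

Definition is_PPC (v : nat) (B P : {set {set 'I_v}}) : Prop :=
  P \subset B /\
  (forall b1 b2, b1 \in P -> b2 \in P -> b1 != b2 -> [disjoint b1 & b2]).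

Definition largest_PPC_size (v : nat) (B : {set {set 'I_v}}) (rho : nat) : Prop :=
  (exists P, is_PPC B P /\ #|P| = rho) /\
  ~ (exists P, is_PPC B P /\ #|P| = rho.+1).

From mathcomp Require Import all_boot zify.
Set Implicit Arguments. Unset Strict Implicit. Unset Printing Implicit Defensive.

(* Write n = 3m with m odd.  The points are three copies of Z_m (levels
   0, 1, 2) and rho points at infinity; the point at infinity s gets a slope
   c_s, distinct for distinct s, and lies on the m lines
   {oo_s, (0, y), (1, y + c_s), (2, y + 2 c_s)}.  As 1 and 2 are invertible
   modulo m, two points of distinct levels lie on at most one line, so these
   rho m lines together with an optimal packing of the points at infinity
   form a packing.  If rho <= m - 2 every block meets the rho points at
   infinity, which bounds every PPC by rho; otherwise 4 (rho + 1) > 3m + rho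
   does.  A PPC of size rho is made of pairwise disjoint lines with distinct
   slopes (a queens-type configuration in Z_3 x Z_m, explicit when 3 | m);
   when rho >= m - 1 it is completed by the four points of each level missed
   by the first m - 4 of these lines, added as blocks, and, when rho = m, by
   a block of the packing at infinity on the unused points.  Surplus blocks
   outside this PPC are finally discarded. *)

Lemma disjointP (T : finType) (A B : {pred T}) :
  reflect (forall z, z \in A -> z \in B -> False) [disjoint A & B].
Proof.
apply: (iffP pred0P) => [AB z zA zB|AB z /=]; first by have := AB z; rewrite /= zA zB.
by apply/negP => /andP[/AB]; apply.
Qed.

Lemma subset_between (T : finType) (P A : {set T}) N :
  P \subset A -> #|P| <= N <= #|A| ->
  exists A' : {set T}, [/\ P \subset A', A' \subset A & #|A'| = N].
Proof.
move Ek: (#|A| - N) => k; elim: k A Ek => [|k IH] A Ek PA /andP[PN NA].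
  by exists A; split=> //; lia.
have [z zA zP] : exists2 z, z \in A & z \notin P.
  apply/subsetPn/negP => /subset_leq_card; lia.
have cardAz := cardsD1 z A; rewrite zA in cardAz.
have [|||A' [PA' A'A <-]] := IH (A :\ z); try lia.
- by rewrite subsetD1 PA.
- by exists A'; split; rewrite // (subset_trans A'A) ?subsetDl.
Qed.

Lemma packing_of_subset v k (A B : {set {set 'I_v}}) :
  A \subset B -> is_packing k B -> is_packing k A.
Proof.
move=> /subsetP AB [B_card B_pair]; split=> [b /AB/B_card //|p q pq].
apply: leq_trans (B_pair p q pq); apply: subset_leq_card.
by apply/subsetP => b; rewrite !inE => /andP[/AB -> ->].
Qed.

Section DisjointFamilies.

Variables (T : finType) (Q : {set {set T}}).
Hypothesis Q_disj :
  forall b1 b2, b1 \in Q -> b2 \in Q -> b1 != b2 -> [disjoint b1 & b2].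

Lemma card_disjoint_family_meet (S : {set T}) :
  (forall b, b \in Q -> exists2 z, z \in b & z \in S) -> #|Q| <= #|S|.
Proof.
move=> QS; pose pickS b := [pick z in b :&: S].
have pickSP b : b \in Q -> exists2 z, pickS b = Some z & z \in b :&: S.
  move=> /QS[z zb zS].
  by rewrite /pickS; case: pickP => [z' | /(_ z)]; [exists z' | rewrite inE zb zS].
rewrite -(card_imset S (@Some_inj _)) -(card_in_imset (f := pickS)).
  apply/subset_leq_card/subsetP => _ /imsetP[b /pickSP[z -> /setIP[_ zS]] ->].
  exact: imset_f.
move=> b1 b2 /[dup] b1Q /pickSP[z1 -> /setIP[zb1 _]] /[dup] b2Q /pickSP[z2 -> /setIP[zb2 _]].
case=> z12; apply/eqP/negPn/negP => /(Q_disj b1Q b2Q) /disjointFr/(_ zb1).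
by rewrite z12 zb2.
Qed.

Lemma card_disjoint_family_mul k : (forall b, b \in Q -> #|b| = k) -> #|Q| * k <= #|T|.
Proof.
move=> Q_card; have /eqP cover_card : trivIset Q by apply/trivIsetP.
rewrite -sum_nat_const -(eq_bigr _ Q_card) cover_card; exact: max_card.
Qed.

End DisjointFamilies.

Lemma eqn_modDl_congr d a a' b b' : a = a' %[mod d] ->
  (a + b == a' + b' %[mod d]) = (b == b' %[mod d]).
Proof. by move=> E; rewrite -modnDml E modnDml eqn_modDl. Qed.

Lemma eq_mod_mul_coprime k m a b : coprime k m -> a < m -> b < m ->
  k * a = k * b %[mod m] -> a = b.
Proof.
move=> km; wlog le_ab : a b / a <= b => [W am bm E|am bm /eqP].
  by case: (leqP a b) => [ab|/ltnW ba]; [apply: W | symmetry; apply: W].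
rewrite eq_sym eqn_mod_dvd ?leq_mul2l ?le_ab ?orbT // -mulnBr.
rewrite Gauss_dvdr; last by rewrite coprime_sym.
move=> /dvdn_leq; case E: (b - a) => [|d]; first lia.
by move=> /(_ isT); lia.
Qed.

Lemma eq_mod_lt3 d a b : a = b %[mod d] -> 0 < d -> a < 3 * d -> b < 3 * d ->
  a = b \/ a = b + d \/ a = b + 2 * d \/ b = a + d \/ b = a + 2 * d.
Proof.
move=> + d_gt0 ad bd; have := divn_eq a d; have := divn_eq b d.
have: a %/ d < 3 by rewrite ltn_divLR // mulnC.
have: b %/ d < 3 by rewrite ltn_divLR // mulnC.
by case: (a %/ d) => [|[|[|//]]]; case: (b %/ d) => [|[|[|//]]]; lia.
Qed.

Lemma slope_unique m a a' c c' L1 L2 : odd m -> c < m -> c' < m -> L1 < L2 < 3 ->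
  a + L1 * c = a' + L1 * c' %[mod m] -> a + L2 * c = a' + L2 * c' %[mod m] ->
  c = c'.
Proof.
move=> m_odd cm c'm /andP[L12 L23] E1.
have [d -> d12] : exists2 d, L2 = L1 + d & 0 < d < 3 by exists (L2 - L1); lia.
rewrite !mulnDl !addnA => /eqP; rewrite eqn_modDl_congr // => /eqP.
apply: eq_mod_mul_coprime => //.
by case/andP: d12; case: d => [|[|[|//]]] // _ _; rewrite ?coprime1n ?coprime2n.
Qed.

(* Line [u] of the grid ['I_3 * Z_m] has slope [r u] and meets level [L] in
   [x u + L * r u]. *)
Definition disjoint_lines (m : nat) (r x : nat -> nat) : Prop :=
  [/\ forall u, u < m -> r u < m,
      forall u v, u < m -> v < m -> r u = r v -> u = v &
      forall u v L, u < m - 2 -> v < m - 2 -> L < 3 ->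
        x u + L * r u = x v + L * r v %[mod m] -> u = v].

Lemma disjoint_lines_id m : odd m -> ~~ (3 %| m) -> disjoint_lines m id id.
Proof.
move=> m_odd m3; split=> // u v L um vm L3.
rewrite -!mulSn; apply: eq_mod_mul_coprime; try lia.
case: L L3 => [|[|[|//]]] _; rewrite ?coprime1n ?coprime2n //.
by rewrite prime_coprime.
Qed.

Section DivisibleByThree.

Variable h : nat.

(* The first [m - 2] lines get the slopes [0, 6h + 1] minus [5h + 2], and the
   line of slope [t] has intercept [t + intercept_shift t]. *)
Definition swap_slope u :=
  if u == 5 * h + 2 then 6 * h + 1 else if u == 6 * h + 1 then 5 * h + 2 else u.

Definition intercept_shift t :=
  if t < 2 * h + 1 then 0 else if t < 3 * h + 1 then 1
  else if t < 5 * h + 2 then 2 else 1.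

Definition shifted_intercept u := swap_slope u + intercept_shift (swap_slope u).

Lemma intercept_shift_cases t :
  [\/ t < 2 * h + 1 /\ intercept_shift t = 0,
      2 * h + 1 <= t < 3 * h + 1 /\ intercept_shift t = 1,
      3 * h + 1 <= t < 5 * h + 2 /\ intercept_shift t = 2 |
      5 * h + 2 <= t /\ intercept_shift t = 1].
Proof.
rewrite /intercept_shift; do ! case: ifP; move=> *;
  [apply: Or41 | apply: Or42 | apply: Or43 | apply: Or44]; lia.
Qed.

Lemma swap_slope_spec u :
  [/\ u = 5 * h + 2 -> swap_slope u = 6 * h + 1,
      u = 6 * h + 1 -> swap_slope u = 5 * h + 2 &
      u <> 5 * h + 2 -> u <> 6 * h + 1 -> swap_slope u = u].
Proof. by rewrite /swap_slope; split; do ! case: eqP; lia. Qed.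

(* Both sides lie below three times the modulus, so they differ by 0, 1 or 2
   times it; each case is ruled out on the intervals where [intercept_shift]
   is constant. *)
Lemma shifted_lines_disjoint t1 t2 L : 0 < h -> t1 <> t2 ->
  t1 < 6 * h + 2 -> t2 < 6 * h + 2 -> t1 <> 5 * h + 2 -> t2 <> 5 * h + 2 -> L < 3 ->
  t1 + intercept_shift t1 + L * t1 <> t2 + intercept_shift t2 + L * t2 %[mod 6 * h + 3].
Proof.
move=> h_gt0 t12 t1m t2m t1h t2h; case: L => [|[|[|//]]] _;
rewrite ?mul0n ?mul1n ?addn0;
case: (intercept_shift_cases t1) => -[R1 ->]; case: (intercept_shift_cases t2) => -[R2 ->] E;
move: (eq_mod_lt3 E); clear E => /(_ ltac:(lia) ltac:(lia) ltac:(lia));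
case=> [|[|[|[|]]]]; lia.
Qed.

Lemma disjoint_lines_swap : 0 < h -> disjoint_lines (6 * h + 3) swap_slope shifted_intercept.
Proof.
move=> h_gt0; split.
- by move=> u um; case: (swap_slope_spec u); lia.
- by move=> u v um vm; case: (swap_slope_spec u); case: (swap_slope_spec v); lia.
move=> u v L um vm L3; rewrite /shifted_intercept.
case: (eqVneq u v) => [//| uv E]; exfalso; move: E.
case: (swap_slope_spec u) (swap_slope_spec v) => [? ? ?] [? ? ?].
apply: shifted_lines_disjoint => //; lia.
Qed.

End DivisibleByThree.

Lemma disjoint_lines_exist m : odd m -> 9 <= m -> exists r x, disjoint_lines m r x.
Proof.
move=> m_odd m9; case: (boolP (3 %| m)) => m3; last first.
  by exists id, id; apply: disjoint_lines_id.
have [h Em] : exists h, m = 6 * h + 3.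
  have: m %% 2 = 1 by rewrite modn2 m_odd.
  by exists (m %/ 6); move: m3; lia.
subst m; exists (swap_slope h), (shifted_intercept h).
by apply: disjoint_lines_swap; lia.
Qed.

Section Construction.

Variables (m rho : nat) (r x f g : nat -> nat).
Hypotheses (m_odd : odd m) (m_ge4 : 4 <= m) (rho_gt0 : 0 < rho) (rho_le_m : rho <= m).
Hypothesis lines_rx : disjoint_lines m r x.
Hypotheses (f_lt : forall s, s < rho -> f s < rho) (g_lt : forall u, u < rho -> g u < rho).
Hypotheses (fK : forall s, s < rho -> g (f s) = s) (gK : forall u, u < rho -> f (g u) = u).

Local Notation v := (3 * m + rho).

Lemma m_gt0 : 0 < m. Proof. lia. Qed.

Definition point0 : 'I_v := Ordinal (ltn_addl (3 * m) rho_gt0).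
Definition grid (L y : nat) : 'I_v := insubd point0 (L * m + y %% m).
Definition infty (s : nat) : 'I_v := insubd point0 (3 * m + s).

Lemma val_grid L y : L < 3 -> val (grid L y) = L * m + y %% m.
Proof.
move=> L3; rewrite /grid val_insubd; case: ifP => // /negP[].
have := ltn_pmod y m_gt0; nia.
Qed.

Lemma val_infty s : s < rho -> val (infty s) = 3 * m + s.
Proof. by move=> s_lt; rewrite /infty val_insubd ltn_add2l s_lt. Qed.

Lemma grid_mod L y : grid L (y %% m) = grid L y.
Proof. by rewrite /grid modn_mod. Qed.

Lemma grid_inj L1 L2 y1 y2 : L1 < 3 -> L2 < 3 -> grid L1 y1 = grid L2 y2 ->
  L1 = L2 /\ y1 = y2 %[mod m].
Proof.
move=> L1_lt L2_lt /(congr1 val); rewrite !val_grid //.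
have := ltn_pmod y1 m_gt0; have := ltn_pmod y2 m_gt0.
move: (y1 %% m) (y2 %% m) => a b a_lt b_lt.
by case: L1 L1_lt => [|[|[|//]]] _; case: L2 L2_lt => [|[|[|//]]] _; lia.
Qed.

Lemma infty_inj s1 s2 : s1 < rho -> s2 < rho -> infty s1 = infty s2 -> s1 = s2.
Proof. by move=> s1_lt s2_lt /(congr1 val); rewrite !val_infty //; lia. Qed.

Lemma grid_neq_infty L y s : L < 3 -> s < rho -> grid L y != infty s.
Proof.
move=> L3 s_lt; apply/eqP => /(congr1 val); rewrite val_grid // val_infty //.
have := ltn_pmod y m_gt0; nia.
Qed.

Lemma infty_ord_inj : injective (fun i : 'I_rho => infty i).
Proof. by move=> i j /infty_inj E; apply/val_inj/E. Qed.

Definition slope s := r (f s).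

Lemma slope_lt s : s < rho -> slope s < m.
Proof. by case: lines_rx => r_lt _ _ s_lt; apply/r_lt/(leq_trans (f_lt s_lt)). Qed.

Lemma slope_inj s1 s2 : s1 < rho -> s2 < rho -> slope s1 = slope s2 -> s1 = s2.
Proof.
case: lines_rx => _ r_inj _ s1_lt s2_lt.
move/r_inj => /(_ (leq_trans (f_lt s1_lt) rho_le_m) (leq_trans (f_lt s2_lt) rho_le_m)).
by move/(congr1 g); rewrite !fK.
Qed.

Definition line s y : {set 'I_v} :=
  infty s |: [set grid L (y + L * slope s) | L : 'I_3].

Lemma lineP p s y : reflect (p = infty s \/ exists2 L, L < 3 & p = grid L (y + L * slope s))
  (p \in line s y).
Proof.
rewrite !inE; apply: (iffP orP) => [[/eqP->|/imsetP[L _ ->]]|[->|[L L3 ->]]].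
- by left.
- by right; exists (val L) => //; apply: ltn_ord.
- by left.
- by right; apply/imsetP; exists (Ordinal L3).
Qed.

Lemma line_mod s y : line s (y %% m) = line s y.
Proof. by congr (_ |: _); apply: eq_imset => L; rewrite /grid modnDml. Qed.

Lemma mem_infty_line s' s y : s' < rho -> s < rho -> (infty s' \in line s y) = (s' == s).
Proof.
move=> s'_lt s_lt; apply/lineP/eqP => [[/infty_inj -> //|[L L3 E]]|->]; last by left.
by move: (grid_neq_infty (y + L * slope s) L3 s'_lt); rewrite E eqxx.
Qed.

Lemma mem_grid_line L y' s y : L < 3 -> s < rho ->
  (grid L y' \in line s y) = (y' == y + L * slope s %[mod m]).
Proof.
move=> L3 s_lt; apply/lineP/eqP => [[E|[L' L'3 /grid_inj[] // <- //]]|E].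
  by move: (grid_neq_infty y' L3 s_lt); rewrite E eqxx.
by right; exists L; rewrite // -grid_mod E grid_mod.
Qed.

(* Two points of distinct levels determine the slope, as [m] is odd. *)
Lemma line_pair s1 s2 y1 y2 p q : s1 < rho -> s2 < rho -> p != q ->
  p \in line s1 y1 -> q \in line s1 y1 -> p \in line s2 y2 -> q \in line s2 y2 ->
  s1 = s2 /\ y1 = y2 %[mod m].
Proof.
move=> s1_lt s2_lt; set c1 := slope s1; set c2 := slope s2.
have same_slope L : L < 3 -> s1 = s2 -> grid L (y1 + L * c1) \in line s2 y2 ->
    s1 = s2 /\ y1 = y2 %[mod m].
  by move=> L3 <-; rewrite mem_grid_line // eqn_modDr => /eqP.
move=> pq /lineP[Ep|[L1 L1_3 Ep]] /lineP[Eq|[L2 L2_3 Eq]]; subst p q.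
- by rewrite eqxx in pq.
- by rewrite mem_infty_line // => /eqP s12; apply: (same_slope L2).
- by rewrite mem_infty_line // => p2 /eqP s12; apply: (same_slope L1).
rewrite !mem_grid_line // => /eqP E1 /eqP E2.
have L12 : L1 != L2 by apply: contraNneq pq => <-.
have c12 : c1 = c2.
  have [c1_lt c2_lt] := (slope_lt s1_lt, slope_lt s2_lt).
  case: (ltngtP L1 L2) L12 => // [L_lt|L_gt] _.
  - by apply: (slope_unique m_odd c1_lt c2_lt _ E1 E2); rewrite L_lt.
  - by apply: (slope_unique m_odd c1_lt c2_lt _ E2 E1); rewrite L_gt.
have s12 := slope_inj s1_lt s2_lt c12.
by apply: (same_slope L1 L1_3 s12); rewrite mem_grid_line // E1.
Qed.

Variable B0 : {set {set 'I_rho}}.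
Hypothesis B0_packing : is_packing 4 B0.

Definition infty_blk (b : {set 'I_rho}) : {set 'I_v} := [set infty i | i : 'I_rho in b].
Definition level L : {set 'I_v} := [set grid L y | y : 'I_m].
Definition covered L : {set 'I_v} := [set grid L (x u + L * r u) | u : 'I_(m - 4)].
Definition leftover L := level L :\: covered L.

Definition line_blks := [set line p.1 p.2 | p : 'I_rho * 'I_m].
Definition infty_blks := [set infty_blk b | b in B0].
Definition leftover_blks :=
  if m.-1 <= rho then [set leftover L | L : 'I_3] else set0.
Definition blocks := line_blks :|: infty_blks :|: leftover_blks.

Lemma infty_blkP p (b : {set 'I_rho}) :
  reflect (exists2 i : 'I_rho, i \in b & p = infty i) (p \in infty_blk b).
Proof. exact: imsetP. Qed.

Lemma leftover_grid p L : p \in leftover L -> exists y, p = grid L y.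
Proof. by rewrite inE => /andP[_ /imsetP[y _ ->]]; exists (val y). Qed.

Lemma card_line s y : s < rho -> #|line s y| = 4.
Proof.
move=> s_lt; rewrite cardsU1 card_imset; last first.
  by move=> L1 L2 /grid_inj[] // /val_inj.
rewrite card_ord; case: imsetP => // -[L _ E].
by move: (grid_neq_infty (y + L * slope s) (ltn_ord L) s_lt); rewrite E eqxx.
Qed.

Lemma card_infty_blk b : b \in B0 -> #|infty_blk b| = 4.
Proof.
by case: B0_packing => B0_card _ /B0_card; rewrite card_imset //; apply: infty_ord_inj.
Qed.

Lemma card_leftover L : L < 3 -> #|leftover L| = 4.
Proof.
move=> L3; have covered_level : covered L \subset level L.
  apply/subsetP => _ /imsetP[u _ ->]; apply/imsetP.
  by exists (Ordinal (ltn_pmod (x u + L * r u) m_gt0)); rewrite //= grid_mod.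
have card_level : #|level L| = m.
  rewrite card_imset ?card_ord // => y1 y2 /grid_inj[] // _.
  by rewrite !modn_small // => /val_inj.
have card_covered : #|covered L| = m - 4.
  rewrite card_imset ?card_ord // => u1 u2 /grid_inj[] // _ E.
  case: lines_rx => _ _ lines_disj; apply/val_inj/(lines_disj _ _ L) => //.
  - by apply: leq_trans (ltn_ord u1) _; lia.
  - by apply: leq_trans (ltn_ord u2) _; lia.
by rewrite cardsD (setIidPr covered_level); lia.
Qed.

Lemma line_infty_blk_meet z s y (b : {set 'I_rho}) : s < rho ->
  z \in line s y -> z \in infty_blk b -> z = infty s.
Proof.
move=> s_lt /lineP[//|[L L3 ->]] /infty_blkP[i _ E].
by move: (grid_neq_infty (y + L * slope s) L3 (ltn_ord i)); rewrite E eqxx.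
Qed.

Lemma line_leftover_meet z s y L : s < rho -> L < 3 ->
  z \in line s y -> z \in leftover L -> z = grid L (y + L * slope s).
Proof.
move=> s_lt L3 zl /leftover_grid[y' Ez]; move: zl; rewrite Ez.
by rewrite mem_grid_line // => /eqP E; rewrite -grid_mod E grid_mod.
Qed.

Lemma infty_blk_leftover_disjoint (b : {set 'I_rho}) L : L < 3 ->
  [disjoint infty_blk b & leftover L].
Proof.
move=> L3; apply/disjointP => _ /infty_blkP[i _ ->] /leftover_grid[y /esym/eqP].
by rewrite (negbTE (grid_neq_infty y L3 (ltn_ord i))).
Qed.

Lemma leftover_meet z L1 L2 : L1 < 3 -> L2 < 3 ->
  z \in leftover L1 -> z \in leftover L2 -> L1 = L2.
Proof.
by move=> L1_3 L2_3 /leftover_grid[y1 ->] /leftover_grid[y2 /grid_inj[]].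
Qed.

Lemma mem_infty_blk (i : 'I_rho) (b : {set 'I_rho}) : (infty i \in infty_blk b) = (i \in b).
Proof. exact/mem_imset/infty_ord_inj. Qed.

Variant blocks_spec (b : {set 'I_v}) : Prop :=
  | BlockLine s y of s < rho & y < m & b = line s y
  | BlockInfty b' of b' \in B0 & b = infty_blk b'
  | BlockLeftover L of L < 3 & m.-1 <= rho & b = leftover L.

Lemma blocksP b : b \in blocks -> blocks_spec b.
Proof.
rewrite !inE => /orP[/orP[/imsetP[[s y] _ ->]|/imsetP[b' b'_in ->]]|].
- exact: (BlockLine (ltn_ord s) (ltn_ord y)).
- exact: (BlockInfty b'_in).
- rewrite /leftover_blks; case: ifP => [rho_ge|]; last by rewrite inE.
  by case/imsetP => L _ ->; apply: (BlockLeftover (ltn_ord L) rho_ge).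
Qed.

Lemma blocks_pair_unique b1 b2 p q : b1 \in blocks -> b2 \in blocks -> p != q ->
  p \in b1 -> q \in b1 -> p \in b2 -> q \in b2 -> b1 = b2.
Proof.
move=> /blocksP k1 /blocksP k2 pq p1 q1 p2 q2.
have single z0 : (forall z, z \in b1 -> z \in b2 -> z = z0) -> b1 = b2.
  by move=> E; move: pq; rewrite (E p p1 p2) (E q q1 q2) eqxx.
have disj : [disjoint b1 & b2] -> b1 = b2 by move/disjointFr/(_ p1); rewrite p2.
case: k1 => [s1 y1 s1_lt y1_lt E1|b1' b1'_in E1|L1 L1_3 _ E1];
case: k2 => [s2 y2 s2_lt y2_lt E2|b2' b2'_in E2|L2 L2_3 _ E2]; subst b1 b2.
- have [-> ] := line_pair s1_lt s2_lt pq p1 q1 p2 q2.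
  by rewrite !modn_small // => ->.
- by apply: single => z z1 z2; apply: line_infty_blk_meet z1 z2.
- by apply: single => z z1 z2; apply: line_leftover_meet z1 z2.
- by apply: single => z z1 z2; apply: line_infty_blk_meet z2 z1.
- case/infty_blkP: p1 p2 q2 pq => i i1 ->; case/infty_blkP: q1 => j j1 ->.
  rewrite !mem_infty_blk => i2 j2 pq; have ij : i != j by apply: contraNneq pq => ->.
  case: B0_packing => _ /(_ i j ij) /card_le1_eqP /(_ b1' b2').
  by rewrite !inE b1'_in b2'_in i1 j1 i2 j2 => ->.
- exact/disj/infty_blk_leftover_disjoint.
- by apply: single => z z1 z2; apply: line_leftover_meet z2 z1.
- by apply/disj; rewrite disjoint_sym; apply: infty_blk_leftover_disjoint.
- by rewrite (leftover_meet L1_3 L2_3 p1 p2).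
Qed.

Lemma blocks_packing : is_packing 4 blocks.
Proof.
split=> [b /blocksP[s y s_lt _ ->|b' b'_in ->|L L3 _ ->]|p q pq].
- exact: card_line.
- exact: card_infty_blk.
- exact: card_leftover.
apply/card_le1_eqP => b1 b2 /setIdP[b1_in /andP[p1 q1]] /setIdP[b2_in /andP[p2 q2]].
by rewrite (blocks_pair_unique b1_in b2_in pq p1 q1 p2 q2).
Qed.

Lemma card_line_blks : #|line_blks| = rho * m.
Proof.
rewrite card_imset ?card_prod ?card_ord // => -[s1 y1] [s2 y2] /= E.
have s12 : s1 = s2.
  apply/val_inj/eqP; rewrite -(mem_infty_line y2) //= -E.
  by rewrite mem_infty_line.
subst s2; congr (_, _); apply/val_inj/eqP.
move: (mem_grid_line y1 y1 (isT : 0 < 3) (ltn_ord s1)).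
by rewrite E mem_grid_line // !mul0n !addn0 eqxx !modn_small.
Qed.

Lemma card_blocks : rho * m + #|B0| <= #|blocks|.
Proof.
have lines_infty : [disjoint line_blks & infty_blks].
  apply/disjointP => _ /imsetP[[s y] _ ->] /imsetP[b _ E].
  have := mem_grid_line y (val y) (isT : 0 < 3) (ltn_ord s).
  rewrite mul0n addn0 eqxx E => /infty_blkP[i _ /eqP].
  by rewrite (negbTE (grid_neq_infty _ _ (ltn_ord i))).
have := (leq_card_setU line_blks infty_blks).2; rewrite lines_infty => /eqP.
rewrite card_line_blks (card_imset _ (imset_inj infty_ord_inj)) => <-.
by apply: subset_leq_card; rewrite subsetUl.
Qed.

Lemma PPC_le Q : is_PPC blocks Q -> #|Q| <= rho.
Proof.
move=> [/subsetP QB Q_disj]; case: (leqP rho (m - 2)) => [rho_small|rho_large].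
  pose infty_pts := [set infty i | i : 'I_rho].
  apply: leq_trans (card_disjoint_family_meet Q_disj (S := infty_pts) _) _; last first.
    by rewrite card_imset ?card_ord //; apply: infty_ord_inj.
  move=> b /QB /blocksP[s y s_lt _ ->|b' b'_in ->|L _ rho_ge]; last by lia.
    by exists (infty s); [rewrite mem_infty_line | apply/imsetP; exists (Ordinal s_lt)].
  have /card_gt0P[i ib'] : 0 < #|b'| by case: B0_packing => B0_card _; rewrite B0_card.
  by exists (infty i); [rewrite mem_infty_blk | apply: imset_f].
have := card_disjoint_family_mul Q_disj (k := 4).
case: blocks_packing => blocks_card _ /(_ (fun b bQ => blocks_card b (QB b bQ))).
by rewrite card_ord; lia.
Qed.

(* For [rho = m] the parallel class uses the lines through [infty (g u)] for
   [u < m - 4]; the four remaining points at infinity must form a block. *)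
Hypothesis tail_in_B0 : rho = m -> [set i : 'I_rho | m - 4 <= f i] \in B0.

Definition par_line u := line (g u) (x u).
Definition tail_blk := infty_blk [set i : 'I_rho | m - 4 <= f i].
Definition ppc_blk u :=
  if (rho <= m - 2) || (u < m - 4) then par_line u
  else if u < m - 1 then leftover (u - (m - 4)) else tail_blk.

Lemma slope_g u : u < rho -> slope (g u) = r u.
Proof. by move=> u_lt; rewrite /slope gK. Qed.

Lemma par_line_in u : u < rho -> par_line u \in blocks.
Proof.
move=> u_lt; rewrite /par_line -line_mod !inE; apply/orP; left; apply/orP; left.
by apply/imsetP; exists (Ordinal (g_lt u_lt), Ordinal (ltn_pmod (x u) m_gt0)).
Qed.

Lemma par_line_disjoint u u' : u < rho -> u' < rho -> u < m - 2 -> u' < m - 2 ->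
  u != u' -> [disjoint par_line u & par_line u'].
Proof.
move=> u_lt u'_lt u_m u'_m uu'; apply/disjointP => z.
case/lineP=> [->|[L L3 ->]]; rewrite ?mem_infty_line ?mem_grid_line ?g_lt //.
  by move=> /eqP/(congr1 f); rewrite !gK //; apply/eqP.
rewrite !slope_g // => /eqP; case: lines_rx => _ _ lines_disj.
by move/lines_disj => /(_ u_m u'_m L3) /eqP; apply/negP.
Qed.

Lemma par_line_leftover_disjoint u L : u < rho -> u < m - 4 -> L < 3 ->
  [disjoint par_line u & leftover L].
Proof.
move=> u_lt u_m L3; apply/disjointP => z z1 z2.
have := line_leftover_meet (g_lt u_lt) L3 z1 z2; move: z2 => /[swap] ->.
rewrite slope_g // inE.
by case/andP => /negP[]; apply/imsetP; exists (Ordinal u_m).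
Qed.

Lemma par_line_tail_disjoint u : u < rho -> u < m - 4 -> [disjoint par_line u & tail_blk].
Proof.
move=> u_lt u_m; apply/disjointP => z z1 z2.
have := line_infty_blk_meet (g_lt u_lt) z1 z2; move: z2 => /[swap] ->.
case/infty_blkP => i; rewrite inE => fi /(infty_inj (g_lt u_lt) (ltn_ord i)) gu.
by move: fi; rewrite -gu gK //; lia.
Qed.

Lemma leftover_disjoint L L' : L < 3 -> L' < 3 -> L != L' ->
  [disjoint leftover L & leftover L'].
Proof.
move=> L3 L'3 LL'; apply/disjointP => z z1 z2.
by move: LL'; rewrite (leftover_meet L3 L'3 z1 z2) eqxx.
Qed.

Lemma ppc_blk_in u : u < rho -> ppc_blk u \in blocks.
Proof.
move=> u_lt; rewrite /ppc_blk; case: ifP => [_|/norP[rho_large u_large]].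
  exact: par_line_in.
rewrite !inE; case: ifP => u_m.
  apply/orP; right; rewrite /leftover_blks ifT; last by lia.
  have L3 : u - (m - 4) < 3 by lia.
  by apply/imsetP; exists (Ordinal L3).
apply/orP; left; apply/orP; right; apply: imset_f; apply: tail_in_B0; lia.
Qed.

Variant ppc_blk_spec u : {set 'I_v} -> Prop :=
  | PpcLine of u < m - 4 : ppc_blk_spec u (par_line u)
  | PpcLeftover of m - 4 <= u < m - 1 : ppc_blk_spec u (leftover (u - (m - 4)))
  | PpcTail of m - 1 <= u : ppc_blk_spec u tail_blk.

Lemma ppc_blkP u : m - 2 < rho -> ppc_blk_spec u (ppc_blk u).
Proof.
rewrite /ppc_blk ltnNge => /negbTE ->.
case: ltnP => [|u_large]; first exact: PpcLine.
by case: ltnP => u_m; [apply: PpcLeftover; lia | apply: PpcTail].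
Qed.

Lemma ppc_blk_disjoint u u' : u < rho -> u' < rho -> u != u' ->
  [disjoint ppc_blk u & ppc_blk u'].
Proof.
move=> u_lt u'_lt uu'; have [rho_small|rho_large] := leqP rho (m - 2).
  by rewrite /ppc_blk rho_small; apply: par_line_disjoint => //; lia.
case: (ppc_blkP u rho_large) => [u_m|/andP[u_m1 u_m2]|u_m];
case: (ppc_blkP u' rho_large) => [u'_m|/andP[u'_m1 u'_m2]|u'_m].
- by apply: par_line_disjoint => //; lia.
- by apply: par_line_leftover_disjoint => //; lia.
- by apply: par_line_tail_disjoint.
- by rewrite disjoint_sym; apply: par_line_leftover_disjoint => //; lia.
- by apply: leftover_disjoint; lia.
- by rewrite disjoint_sym; apply: infty_blk_leftover_disjoint; lia.
- by rewrite disjoint_sym; apply: par_line_tail_disjoint.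
- by apply: infty_blk_leftover_disjoint; lia.
- lia.
Qed.

Definition ppc := [set ppc_blk u | u : 'I_rho].

Lemma ppc_PPC : is_PPC blocks ppc.
Proof.
split; first by apply/subsetP => _ /imsetP[u _ ->]; apply: ppc_blk_in.
move=> _ _ /imsetP[u1 _ ->] /imsetP[u2 _ ->] neq.
by apply: ppc_blk_disjoint (ltn_ord u1) (ltn_ord u2) _; apply: contraNneq neq => /val_inj ->.
Qed.

Lemma card_ppc : #|ppc| = rho.
Proof.
rewrite card_imset ?card_ord // => u1 u2 E; apply/eqP/negPn/negP => u12.
have /card_gt0P[z zu1] : 0 < #|ppc_blk u1|.
  by case: blocks_packing => blocks_card _; rewrite blocks_card ?ppc_blk_in.
have := ppc_blk_disjoint (ltn_ord u1) (ltn_ord u2) u12.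
by move=> /disjointFr/(_ zu1); rewrite -E zu1.
Qed.

Lemma packing_largest_PPC : exists B : {set {set 'I_v}},
  [/\ is_packing 4 B, #|B| = rho * m + #|B0| & largest_PPC_size B rho].
Proof.
have [ppc_blocks _] := ppc_PPC.
have [|B [ppc_B B_blocks <-]] := subset_between ppc_blocks (N := rho * m + #|B0|).
  by rewrite card_ppc card_blocks; nia.
exists B; split=> //; first exact: packing_of_subset B_blocks blocks_packing.
split; first by exists ppc; split; [split=> //; case: ppc_PPC | exact: card_ppc].
case=> Q [[QB Q_disj] Q_card].
suff: #|Q| <= rho by rewrite Q_card ltnn.
by apply: PPC_le; split=> //; apply: subset_trans QB B_blocks.
Qed.

End Construction.

Lemma is_packingP v k (B : {set {set 'I_v}}) : reflect (is_packing k B) (is_packingb k B).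
Proof.
apply: (iffP andP) => [[/forall_inP B_card /forallP B_pair]|[B_card B_pair]]; split.
- by move=> b /B_card /eqP.
- by move=> p q pq; move/forallP/(_ q)/implyP: (B_pair p); apply.
- by apply/forall_inP => b /B_card ->.
- by apply/forallP => p; apply/forallP => q; apply/implyP; apply: B_pair.
Qed.

Lemma D_attained m k : exists2 B : {set {set 'I_m}}, is_packing k B & D m k = #|B|.
Proof.
have : 0 < #|[pred B : {set {set 'I_m}} | is_packingb k B]|.
  apply/card_gt0P; exists set0; rewrite inE; apply/is_packingP.
  by split=> [b|p q _]; [rewrite inE | apply/card_le1_eqP => b1 b2; rewrite !inE].
case/(eq_bigmax_cond (fun B : {set {set 'I_m}} => #|B|)) => B B_pack E.
exists B; first by apply/is_packingP; rewrite inE in B_pack.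
by rewrite /D -E; apply: eq_bigl => ?; rewrite inE.
Qed.

Lemma D_gt0 m k : k <= m -> 0 < D m k.
Proof.
move=> km; pose b := [set widen_ord km i | i : 'I_k].
have b_pack : is_packingb k [set b].
  apply/is_packingP; split=> [b'|p q _]; last first.
    rewrite -(cards1 b); apply/subset_leq_card/subsetP => b'.
    by rewrite !inE => /andP[].
  by rewrite inE => /eqP ->; rewrite card_imset ?card_ord // => i j /(congr1 val) /= /val_inj.
by apply: leq_trans (leq_bigmax_cond _ b_pack); rewrite cards1.
Qed.

Lemma D_eq0 m k : m < k -> D m k = 0.
Proof.
move=> mk; apply/eqP; rewrite -leqn0; apply/bigmax_leqP => B /is_packingP[B_card _].
rewrite leqn0 cards_eq0; apply/eqP/setP => b; rewrite inE; apply/negP => /B_card bk.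
by move: (max_card b); rewrite card_ord bk leqNgt mk.
Qed.

Lemma relabel_tail m (beta : {set 'I_m}) : exists f g : nat -> nat,
  [/\ forall s, s < m -> f s < m, forall u, u < m -> g u < m,
      forall s, s < m -> g (f s) = s, forall u, u < m -> f (g u) = u &
      [set i : 'I_m | m - #|beta| <= f i] = beta].
Proof.
pose L := [seq val i | i <- enum (~: beta) ++ enum beta].
have L_uniq : uniq L.
  rewrite map_inj_uniq ?cat_uniq ?enum_uniq //=; last exact: val_inj.
  by rewrite andbT; apply/hasPn => i; rewrite !mem_enum inE negbK.
have L_size : size L = m.
  by rewrite size_map size_cat -!cardE addnC cardsC card_ord.
have mem_L s : s < m -> s \in L.
  move=> sm; apply/mapP; exists (Ordinal sm) => //.
  by rewrite mem_cat !mem_enum inE; case: (_ \in _).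
exists (index^~ L), (nth 0 L); split.
- by move=> s /mem_L; rewrite -index_mem L_size.
- move=> u um; have /mapP[i _ ->] : nth 0 L u \in L by rewrite mem_nth ?L_size.
  exact: ltn_ord.
- by move=> s /mem_L /(nth_index 0).
- by move=> u um; rewrite index_uniq // L_size.
apply/setP => i; rewrite inE index_map ?index_cat ?mem_enum ?inE; last exact: val_inj.
have size_C : size (enum (~: beta)) = m - #|beta|.
  by rewrite -cardE; move: (cardsC beta); rewrite card_ord; lia.
case: (boolP (i \in beta)) => /= i_beta; first by rewrite size_C leq_addr.
by apply/negbTE; rewrite -ltnNge -size_C index_mem mem_enum inE i_beta.
Qed.

Lemma packing_odd_ge9 m rho : odd m -> 9 <= m -> 0 < rho <= m ->
  exists B : {set {set 'I_(3 * m + rho)}},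
    [/\ is_packing 4 B, #|B| = rho * m + D rho 4 & largest_PPC_size B rho].
Proof.
move=> m_odd m9 /andP[rho_gt0 rho_le]; have m4 : 3 < m by lia.
have [B0 B0_pack B0_card] := D_attained rho 4; rewrite B0_card.
have [r [x lines_rx]] := disjoint_lines_exist m_odd m9.
have [rho_lt|rho_ge] := ltnP rho m.
  apply: (packing_largest_PPC (f := id) (g := id) m_odd m4 rho_gt0 rho_le lines_rx) => //.
  by move=> rho_m; lia.
have rho_m : rho = m by lia.
have /card_gt0P[beta beta_in] : 0 < #|B0|.
  by rewrite -B0_card; apply: D_gt0; lia.
have [f [g [f_lt g_lt fK gK tail_beta]]] := relabel_tail beta.
apply: (packing_largest_PPC m_odd m4 rho_gt0 rho_le lines_rx f_lt g_lt fK gK B0_pack).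
by have [beta_card _] := B0_pack; rewrite -rho_m -(beta_card beta) // tail_beta.
Qed.

Lemma packing_4_points : exists B : {set {set 'I_(3 * 1 + 1)}},
  [/\ is_packing 4 B, #|B| = 1 * 1 + D 1 4 & largest_PPC_size B 1].
Proof.
exists [set setT]; split.
- split=> [b|p q _]; first by rewrite inE => /eqP ->; rewrite cardsT card_ord.
  by apply/card_le1_eqP => b1 b2; rewrite !inE => /andP[/eqP-> _] /andP[/eqP-> _].
- by rewrite cards1 D_eq0.
split.
  exists [set setT]; split; last exact: cards1.
  by split=> // b1 b2; rewrite !inE => /eqP-> /eqP->; rewrite eqxx.
by case=> Q [[/subset_leq_card + _] Q_card]; rewrite Q_card cards1.
Qed.

Theorem theorem2p3 (n rho : nat) :
  0 < n -> n %% 6 = 3 ->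
  n \notin [:: 9; 15; 21; 141; 153; 165; 177; 189; 231; 249; 261; 285; 351; 357] ->
  1 <= rho -> 3 * rho <= n ->
  exists B : {set {set 'I_(n + rho)}},
    is_packing 4 B /\
    #|B| = rho * n %/ 3 + D rho 4 /\
    largest_PPC_size B rho.
Proof.
move=> _ n_mod6 n_exc rho_gt0 rho_le.
have [m n_eq m_odd] : exists2 m, n = 3 * m & odd m.
  exists (n %/ 3); first lia.
  have: n %/ 3 %% 2 = 1 by lia.
  by rewrite modn2; case: odd.
subst n; rewrite mulnCA mulKn //.
suff [B [B_pack B_card B_ppc]] : exists B : {set {set 'I_(3 * m + rho)}},
    [/\ is_packing 4 B, #|B| = rho * m + D rho 4 & largest_PPC_size B rho].
  by exists B.
have [m1|m9] : m = 1 \/ 9 <= m.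
  have: m %% 2 = 1 by rewrite modn2 m_odd.
  by move: n_exc; rewrite !inE; lia.
  have rho1 : rho = 1 by lia.
  by subst m rho; apply: packing_4_points.
by apply: packing_odd_ge9 => //; lia.
Qed.
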